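(* If $\mathrm{Re}(z)<1/2$, then $$z\gamma(z)=-\log(1-z)+\sum_{n=1}^{\infty}\left(\frac{-z}{1-z}\right)^n\sum_{k=0}^{n}(-1)^{k+1}\binom{n}{k}\log(k+1).$$ Equivalently, if $|w|<1$, then $$w\gamma\!\left(\frac{-w}{1-w}\right)=-(1-w)\log(1-w)+(1-w)\sum_{n=1}^{\infty}w^n\sum_{k=0}^{n}(-1)^k\binom{n}{k}\log(k+1).$$
   Context: $\gamma(z)$ is the generalized-Euler-constant function: for $|z|\le1$, $\gamma(z)=\sum_{n=1}^{\infty} z^{n-1}\left(\frac{1}{n}-\log\frac{n+1}{n}\right)$, and for $z\in\mathbb{C}\setminus[1,\infty)$ it denotes the analytic continuation $\gamma(z)=\int_0^1\frac{1-x+\log x}{(1-xz)\log x}\,dx$. $\log$ is the principal branch. *)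

From Stdlib Require Import Reals Binomial.
From Coquelicot Require Import Coquelicot.

Open Scope R_scope.

(* Principal argument Arg z in (-PI, PI]. *)
Definition Carg (z : C) : R :=
  let x := Re z in let y := Im z in
  if Rlt_dec 0 x then atan (y / x)
  else if Rlt_dec x 0 then
    (if Rle_dec 0 y then atan (y / x) + PI else atan (y / x) - PI)
  else if Rlt_dec 0 y then PI / 2
  else if Rlt_dec y 0 then - (PI / 2)
  else 0.

(* Principal branch of the complex logarithm (Clog 0 = ln 0 = 0 by convention, never used). *)
Definition Clog (z : C) : C := (ln (Cmod z), Carg z).

Definition gamma_integrand (z : C) (x : R) : C :=
  Cdiv (RtoC (1 - x + ln x)) (Cmult (Cminus (RtoC 1) (Cmult (RtoC x) z)) (RtoC (ln x))).

(* gamma(z) = int_0^1 (1 - x + log x) / ((1 - x z) log x) dx, for z in C \ [1, oo).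
   The integrand is bounded on (0,1) (limits 1 at 0 and 0 at 1), so this is a
   proper Riemann integral of a C-valued function. *)
Definition gamma_fun (z : C) : C :=
  @RInt C_R_CompleteNormedModule (gamma_integrand z) 0 1.

Definition inner_sum1 (n : nat) : R :=
  sum_f_R0 (fun k => (-1) ^ (k + 1) * Binomial.C n k * ln (INR k + 1)) n.
Definition inner_sum2 (n : nat) : R :=
  sum_f_R0 (fun k => (-1) ^ k * Binomial.C n k * ln (INR k + 1)) n.

From Stdlib Require Import Reals Binomial Lra.
From Coquelicot Require Import Coquelicot.

(* Write L(x) = (x - 1) / ln x, so that the integrand of gamma(z) is (1 - L(x)) / (1 - x z).
   Subtracting z / (1 - x z), whose integral over [0, 1] is -log(1 - z), leaves
   -z L(x) / (1 - x z) = w L(x) / (1 - w (1 - x)) with w = -z / (1 - z), and |w| < 1 exactly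
   when Re z < 1/2. Expanding in powers of w (1 - x) and integrating termwise, the coefficient
   of w^n is the moment of (1 - x)^(n-1) L(x), which the binomial theorem turns into a
   combination of the Frullani-type integrals  int_0^1 (x^k - 1) / ln x dx = log(k + 1);
   these follow by differentiating in k under the integral sign. The second identity is the
   first one at z = -w / (1 - w), for which -z / (1 - z) = w. *)

Open Scope R_scope.

Lemma locally_of_Rabs (P : R -> Prop) (x d : R) :
  0 < d -> (forall v, Rabs (v - x) < d -> P v) -> locally x P.
Proof. intros Hd H. exists (mkposreal d Hd). exact H. Qed.

Lemma continuous_of_eps_delta (f : R -> R) (x : R) :
  (forall eps, 0 < eps -> exists d, 0 < d /\
     forall v, Rabs (v - x) < d -> Rabs (f v - f x) < eps) ->
  continuous f x.
Proof.
  intros H. apply continuity_pt_filterlim.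
  intros eps Heps. destruct (H eps Heps) as [d [Hd Hv]].
  exists d; split; [exact Hd|]. intros v [_ Hdv]. apply Hv, Hdv.
Qed.

Lemma continuous_of_derive (f : R -> R) (x : R) : ex_derive f x -> continuous f x.
Proof. apply (ex_derive_continuous (K := R_AbsRing) (V := R_NormedModule)). Qed.

Lemma continuous_of_continuity_2d_pt (f : R -> R -> R) (s t : R) :
  continuity_2d_pt f s t -> continuous (f s) t.
Proof.
  intros H. apply continuous_of_eps_delta. intros eps Heps.
  destruct (H (mkposreal eps Heps)) as [d Hd].
  exists d. split; [apply cond_pos|]. intros v Hv. apply Hd; [|exact Hv].
  rewrite Rminus_eq_0, Rabs_R0. apply cond_pos.
Qed.

Lemma is_derive_id_mul_0 (g : R -> R) :
  continuous g 0 -> is_derive (fun t => t * g t) 0 (g 0).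
Proof.
  intros Hg. apply is_derive_Reals. intros eps Heps.
  destruct (proj2 (continuity_pt_filterlim g 0) Hg eps Heps) as [d [Hd Hv]].
  exists (mkposreal d Hd). intros h Hh Hhd.
  cbv beta. rewrite Rplus_0_l, Rmult_0_l, Rminus_0_r.
  replace (h * g h / h - g 0) with (g h - g 0) by (field; exact Hh).
  apply (Hv h). split; [split; [exact I|congruence]|].
  simpl. unfold R_dist. rewrite Rminus_0_r. exact Hhd.
Qed.

Lemma is_RInt_ext_01 (f g : R -> R) (l : R) :
  (forall x, 0 < x < 1 -> f x = g x) -> is_RInt f 0 1 l -> is_RInt g 0 1 l.
Proof.
  intros Hfg. apply is_RInt_ext. rewrite Rmin_left, Rmax_right by lra. exact Hfg.
Qed.

Lemma is_RInt_derive_01 (F f : R -> R) :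
  (forall x, 0 <= x <= 1 -> is_derive F x (f x)) ->
  (forall x, 0 <= x <= 1 -> continuous f x) ->
  is_RInt f 0 1 (F 1 - F 0).
Proof.
  intros HF Hf. apply (is_RInt_derive (V := R_CompleteNormedModule));
    rewrite Rmin_left, Rmax_right by lra; assumption.
Qed.

Lemma ex_RInt_01_of_continuous (f : R -> R) :
  (forall x, 0 <= x <= 1 -> continuous f x) -> ex_RInt f 0 1.
Proof.
  intros Hf. apply (ex_RInt_continuous (V := R_CompleteNormedModule)).
  rewrite Rmin_left, Rmax_right by lra. exact Hf.
Qed.

Lemma is_RInt_sum_n {V : NormedModule R_AbsRing} (f : nat -> R -> V) (l : nat -> V)
  (a b : R) (n : nat) :
  (forall k, is_RInt (f k) a b (l k)) ->
  is_RInt (fun x => sum_n (fun k => f k x) n) a b (sum_n l n).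
Proof.
  intros Hf. induction n as [|n IH].
  - rewrite sum_O. apply is_RInt_ext with (f := f 0%nat); [|apply Hf].
    intros. rewrite sum_O. reflexivity.
  - rewrite sum_Sn.
    apply is_RInt_ext with (f := fun x => plus (sum_n (fun k => f k x) n) (f (S n) x)).
    + intros. rewrite sum_Sn. reflexivity.
    + apply is_RInt_plus; [exact IH|apply Hf].
Qed.

(** * The kernel [(x^s - 1) / ln x] *)

Definition xpow (s x : R) : R := if Rle_dec x 0 then 0 else exp (s * ln x).

(* Extended by its limits at [x = 1] and, for [s > 0], at [x = 0]. *)
Definition powm1_div_ln (s x : R) : R :=
  if Rle_dec x 0 then 0
  else if Req_EM_T x 1 then s else (exp (s * ln x) - 1) / ln x.

Lemma xpow_le_0 (s x : R) : x <= 0 -> xpow s x = 0.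
Proof. intros Hx. unfold xpow. destruct (Rle_dec x 0); [reflexivity|lra]. Qed.

Lemma continuity_2d_pt_xpow_0 (s : R) : 0 < s -> continuity_2d_pt xpow s 0.
Proof.
  intros Hs eps.
  set (d := Rmin (s / 2) (Rmin 1 (exp (2 / s * ln eps)))).
  assert (Hd : 0 < d) by (apply Rmin_pos; [lra|apply Rmin_pos; [lra|apply exp_pos]]).
  exists (mkposreal d Hd). intros u v Hu Hv. simpl in Hu, Hv.
  rewrite Rminus_0_r in Hv. rewrite (xpow_le_0 s 0), Rminus_0_r by lra.
  unfold xpow. destruct (Rle_dec v 0) as [Hv0|Hv0].
  { rewrite Rabs_R0. apply cond_pos. }
  assert (Hus : s / 2 < u).
  { assert (Rabs (u - s) < s / 2) by (eapply Rlt_le_trans; [exact Hu|apply Rmin_l]).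
    apply Rabs_def2 in H. lra. }
  assert (Hv1 : v < 1 /\ v < exp (2 / s * ln eps)).
  { rewrite Rabs_right in Hv by lra. unfold d in Hv.
    assert (H := Rmin_r (s / 2) (Rmin 1 (exp (2 / s * ln eps)))).
    assert (H1 := Rmin_l 1 (exp (2 / s * ln eps))).
    assert (H2 := Rmin_r 1 (exp (2 / s * ln eps))). lra. }
  assert (Hln : ln v < 0) by (rewrite <- ln_1; apply ln_increasing; lra).
  assert (Hlneps : ln v < 2 / s * ln eps).
  { rewrite <- (ln_exp (2 / s * ln eps)). apply ln_increasing; lra. }
  rewrite Rabs_right by (left; apply exp_pos).
  rewrite <- (exp_ln eps) by apply cond_pos. apply exp_increasing.
  apply Rle_lt_trans with (s / 2 * ln v); [nra|].
  replace (ln eps) with (s / 2 * (2 / s * ln eps)) by (field; lra).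
  apply Rmult_lt_compat_l; lra.
Qed.

Lemma continuity_2d_pt_xpow (s t : R) : 0 < s -> continuity_2d_pt xpow s t.
Proof.
  intros Hs. destruct (Rtotal_order t 0) as [Ht|[Ht|Ht]].
  - apply continuity_2d_pt_ext_loc with (f := fun _ _ => 0).
    + assert (Hd : 0 < - t) by lra. exists (mkposreal _ Hd). simpl.
      intros u v _ Hv. apply Rabs_def2 in Hv. rewrite xpow_le_0; [reflexivity|lra].
    + apply continuity_2d_pt_const.
  - subst t. apply continuity_2d_pt_xpow_0, Hs.
  - apply continuity_2d_pt_ext_loc with (f := fun u v => exp (u * ln v)).
    + exists (mkposreal t Ht). simpl. intros u v _ Hv. apply Rabs_def2 in Hv.
      unfold xpow. destruct (Rle_dec v 0); [lra|reflexivity].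
    + apply continuity_1d_2d_pt_comp.
      * apply derivable_continuous_pt, derivable_pt_exp.
      * apply continuity_2d_pt_mult; [apply continuity_2d_pt_id1|].
        apply continuity_1d_2d_pt_comp with (f := ln) (g := fun _ v => v).
        -- apply continuity_pt_filterlim, continuous_ln, Ht.
        -- apply continuity_2d_pt_id2.
Qed.

Lemma is_derive_powm1_div_ln (s x : R) :
  is_derive (fun u => powm1_div_ln u x) s (xpow s x).
Proof.
  unfold powm1_div_ln, xpow. destruct (Rle_dec x 0).
  - apply (is_derive_const 0).
  - destruct (Req_EM_T x 1) as [->|Hx1].
    + rewrite ln_1, Rmult_0_r, exp_0. apply (is_derive_id s).
    + assert (Hl : ln x <> 0) by (apply ln_neq_0; lra).
      auto_derive; [auto|field; exact Hl].
Qed.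

Lemma powm1_div_ln_bounds (s x : R) : 0 <= s -> 0 < x < 1 ->
  0 <= powm1_div_ln s x <= s /\ powm1_div_ln s x * (- ln x) <= 1.
Proof.
  intros Hs Hx. unfold powm1_div_ln.
  destruct (Rle_dec x 0); [lra|]. destruct (Req_EM_T x 1); [lra|].
  assert (Hl : ln x < 0) by (rewrite <- ln_1; apply ln_increasing; lra).
  assert (Hlow := exp_ineq1_le (s * ln x)).
  assert (Hup : exp (s * ln x) <= 1).
  { rewrite <- exp_0. destruct (Req_dec s 0) as [->|Hs0].
    - rewrite Rmult_0_l. lra.
    - left. apply exp_increasing. nra. }
  assert (He := exp_pos (s * ln x)).
  replace ((exp (s * ln x) - 1) / ln x) with ((1 - exp (s * ln x)) / (- ln x))
    by (field; lra).
  split; [split|].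
  - apply Rdiv_le_0_compat; lra.
  - apply Rle_div_l; lra.
  - unfold Rdiv. rewrite Rmult_assoc, Rinv_l by lra. lra.
Qed.

Lemma Rabs_powm1_div_ln_le (s x : R) : 0 <= s -> x <= 1 -> Rabs (powm1_div_ln s x) <= s.
Proof.
  intros Hs Hx. destruct (Rle_dec x 0) as [Hx0|Hx0].
  { unfold powm1_div_ln. destruct (Rle_dec x 0); [|lra]. rewrite Rabs_R0. exact Hs. }
  destruct (Req_dec x 1) as [->|Hx1].
  { unfold powm1_div_ln. destruct (Rle_dec 1 0); [lra|].
    destruct (Req_EM_T 1 1); [|lra]. rewrite Rabs_right; lra. }
  destruct (powm1_div_ln_bounds s x Hs ltac:(lra)) as [Hb _].
  rewrite Rabs_right; lra.
Qed.

Lemma continuous_powm1_div_ln_0 (s : R) : 0 < s -> continuous (powm1_div_ln s) 0.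
Proof.
  intros Hs. apply continuous_of_eps_delta. intros eps Heps.
  exists (Rmin (1 / 2) (exp (- / eps))). split.
  { apply Rmin_pos; [lra|apply exp_pos]. }
  intros v Hv. rewrite Rminus_0_r in Hv.
  assert (Hv1 := Rlt_le_trans _ _ _ Hv (Rmin_l _ _)).
  assert (Hv2 := Rlt_le_trans _ _ _ Hv (Rmin_r _ _)).
  unfold powm1_div_ln at 2. destruct (Rle_dec 0 0); [|lra]. rewrite Rminus_0_r.
  destruct (Rle_dec v 0) as [Hv0|Hv0].
  { unfold powm1_div_ln. destruct (Rle_dec v 0); [|lra]. rewrite Rabs_R0. exact Heps. }
  apply Rabs_def2 in Hv1. rewrite Rabs_right in Hv2 by lra.
  assert (Hln : ln v < - / eps) by (rewrite <- (ln_exp (- / eps)); apply ln_increasing; lra).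
  assert (Hinv : 0 < / eps) by (apply Rinv_0_lt_compat, Heps).
  destruct (powm1_div_ln_bounds s v ltac:(lra) ltac:(lra)) as [[H0 _] H1].
  rewrite Rabs_right by lra.
  assert (H2 : powm1_div_ln s v * / eps < 1) by nra.
  apply Rmult_lt_reg_r with (/ eps); [exact Hinv|]. rewrite Rinv_r; lra.
Qed.

Lemma continuous_powm1_div_ln_1 (s : R) : continuous (powm1_div_ln s) 1.
Proof.
  apply continuous_of_eps_delta. intros eps Heps.
  assert (Hd : derivable_pt_lim (fun u => exp (s * u)) 0 s).
  { apply is_derive_Reals. auto_derive; [exact I|]. rewrite Rmult_0_r, exp_0. ring. }
  destruct (Hd eps Heps) as [d1 Hd1].
  destruct (proj2 (continuity_pt_filterlim ln 1) (continuous_ln 1 Rlt_0_1) d1 (cond_pos d1))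
    as [d2 [Hd2 Hl2]].
  exists (Rmin d2 (1 / 2)). split; [apply Rmin_pos; lra|].
  intros v Hv.
  assert (Hv2 := Rlt_le_trans _ _ _ Hv (Rmin_l _ _)).
  assert (Hv3 := Rlt_le_trans _ _ _ Hv (Rmin_r _ _)). apply Rabs_def2 in Hv3.
  unfold powm1_div_ln. destruct (Rle_dec 1 0); [lra|]. destruct (Req_EM_T 1 1); [|lra].
  destruct (Rle_dec v 0); [lra|]. destruct (Req_EM_T v 1) as [Hv1|Hv1].
  { rewrite Rminus_eq_0, Rabs_R0. exact Heps. }
  assert (Hlv : ln v <> 0) by (apply ln_neq_0; lra).
  assert (Hlv2 : Rabs (ln v) < d1).
  { assert (H := Hl2 v (conj (conj I (not_eq_sym Hv1)) Hv2)).
    simpl in H. unfold R_dist in H. rewrite ln_1, Rminus_0_r in H. exact H. }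
  specialize (Hd1 (ln v) Hlv Hlv2).
  rewrite Rplus_0_l, Rmult_0_r, exp_0 in Hd1. exact Hd1.
Qed.

Lemma continuous_powm1_div_ln (s x : R) : 0 < s -> 0 <= x ->
  continuous (powm1_div_ln s) x.
Proof.
  intros Hs Hx.
  destruct (Req_dec x 0) as [->|Hx0]; [apply continuous_powm1_div_ln_0, Hs|].
  destruct (Req_dec x 1) as [->|Hx1]; [apply continuous_powm1_div_ln_1|].
  assert (Hl : ln x <> 0) by (apply ln_neq_0; lra).
  apply continuous_ext_loc with (g := fun v => (exp (s * ln v) - 1) / ln v).
  - apply locally_of_Rabs with (d := Rmin x (Rabs (x - 1))).
    { apply Rmin_pos; [lra|apply Rabs_pos_lt; lra]. }
    intros v Hv.
    assert (Hva := Rlt_le_trans _ _ _ Hv (Rmin_l _ _)).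
    assert (Hvb := Rlt_le_trans _ _ _ Hv (Rmin_r _ _)).
    apply Rabs_def2 in Hva.
    unfold powm1_div_ln. destruct (Rle_dec v 0); [lra|].
    destruct (Req_EM_T v 1) as [->|]; [|reflexivity].
    rewrite Rabs_minus_sym in Hvb. lra.
  - apply continuous_of_derive. auto_derive. repeat split; auto; lra.
Qed.

Lemma powm1_div_ln_0 (x : R) : powm1_div_ln 0 x = 0.
Proof.
  unfold powm1_div_ln. destruct (Rle_dec x 0); [reflexivity|].
  destruct (Req_EM_T x 1); [reflexivity|].
  rewrite Rmult_0_l, exp_0, Rminus_eq_0. apply Rdiv_0_l.
Qed.

Lemma is_RInt_xpow (u : R) : 0 < u -> is_RInt (xpow u) 0 1 (/ (u + 1)).
Proof.
  intros Hu.
  assert (Hcont : forall t, continuous (xpow u) t)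
    by (intros t; apply continuous_of_continuity_2d_pt, continuity_2d_pt_xpow, Hu).
  set (F := fun t => t * (xpow u t / (u + 1))).
  replace (/ (u + 1)) with (F 1 - F 0).
  2:{ unfold F, xpow. destruct (Rle_dec 1 0); [lra|].
      rewrite ln_1, Rmult_0_r, exp_0. field. lra. }
  apply is_RInt_derive_01; [|intros t _; apply Hcont].
  intros t [Ht0 _]. destruct (Rle_lt_or_eq_dec 0 t Ht0) as [Ht|<-].
  - apply is_derive_ext_loc with (f := fun t => t * (exp (u * ln t) / (u + 1))).
    + apply locally_of_Rabs with (d := t); [exact Ht|]. intros v Hv. apply Rabs_def2 in Hv.
      unfold F, xpow. destruct (Rle_dec v 0); [lra|reflexivity].
    + unfold xpow. destruct (Rle_dec t 0); [lra|]. auto_derive; [lra|]. field. lra.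
  - replace (xpow u 0) with (xpow u 0 / (u + 1)) by (rewrite xpow_le_0 by lra; field; lra).
    apply is_derive_id_mul_0.
    apply (continuous_mult (K := R_AbsRing) (xpow u) (fun _ => / (u + 1))).
    + apply Hcont.
    + apply continuous_const.
Qed.

Lemma ex_RInt_powm1_div_ln (s : R) : 0 <= s -> ex_RInt (powm1_div_ln s) 0 1.
Proof.
  intros Hs. destruct (Rle_lt_or_eq_dec 0 s Hs) as [Hs0|<-].
  - apply ex_RInt_01_of_continuous. intros x Hx. apply continuous_powm1_div_ln; lra.
  - apply ex_RInt_ext with (f := fun _ => 0); [intros; symmetry; apply powm1_div_ln_0|].
    apply ex_RInt_const.
Qed.

Lemma is_derive_RInt_powm1_div_ln (u : R) : 0 < u ->
  is_derive (fun s => RInt (powm1_div_ln s) 0 1) u (/ (u + 1)).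
Proof.
  intros Hu.
  assert (HD : forall s t, Derive (fun v => powm1_div_ln v t) s = xpow s t).
  { intros s t. apply is_derive_unique, is_derive_powm1_div_ln. }
  replace (/ (u + 1)) with (RInt (fun t => Derive (fun v => powm1_div_ln v t) u) 0 1).
  - apply (is_derive_RInt_param powm1_div_ln).
    + apply filter_forall. intros s t _. exists (xpow s t). apply is_derive_powm1_div_ln.
    + intros t _. apply continuity_2d_pt_ext with (f := xpow).
      * intros s v. symmetry. apply HD.
      * apply continuity_2d_pt_xpow, Hu.
    + apply locally_of_Rabs with (d := u); [exact Hu|]. intros v Hv. apply Rabs_def2 in Hv.
      apply ex_RInt_powm1_div_ln. lra.
  - rewrite (RInt_ext _ (xpow u)) by (intros; apply HD).
    apply is_RInt_unique, is_RInt_xpow, Hu.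
Qed.

Lemma Rabs_RInt_powm1_div_ln_le (s : R) : 0 < s -> Rabs (RInt (powm1_div_ln s) 0 1) <= s.
Proof.
  intros Hs. replace s with ((1 - 0) * s) at 2 by ring.
  apply (norm_RInt_le_const (V := R_NormedModule) (powm1_div_ln s) 0 1); [lra| |].
  - intros x Hx. apply Rabs_powm1_div_ln_le; lra.
  - apply (RInt_correct (V := R_CompleteNormedModule)), ex_RInt_powm1_div_ln. lra.
Qed.

(* Differentiating in [s] under the integral sign gives [1 / (s + 1)]; the constant of
   integration vanishes because the integral is [O(s)] as [s -> 0]. *)
Lemma RInt_powm1_div_ln (u : R) : 0 <= u -> RInt (powm1_div_ln u) 0 1 = ln (u + 1).
Proof.
  intros Hu. destruct (Rle_lt_or_eq_dec 0 u Hu) as [Hu0|<-].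
  2:{ rewrite Rplus_0_l, ln_1, (RInt_ext _ (fun _ => 0)) by (intros; apply powm1_div_ln_0).
      rewrite RInt_const. apply Rmult_0_r. }
  set (g := fun s => RInt (powm1_div_ln s) 0 1 - ln (s + 1)).
  assert (Hg' : forall s, 0 < s -> is_derive g s 0).
  { intros s Hs.
    assert (Hln : is_derive (fun v => ln (v + 1)) s (/ (s + 1))) by (auto_derive; [lra|field; lra]).
    assert (H := is_derive_minus _ _ _ _ _ (is_derive_RInt_powm1_div_ln s Hs) Hln).
    unfold minus, plus, opp in H; simpl in H. rewrite Rplus_opp_r in H. exact H. }
  assert (Hsmall : forall e, 0 < e -> Rabs (g e) <= 2 * e).
  { intros e He. unfold g.
    assert (H1 := Rabs_RInt_powm1_div_ln_le e He).
    assert (H2 : 0 <= ln (e + 1) <= e).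
    { split; [rewrite <- ln_1; apply ln_le; lra|].
      rewrite <- (ln_exp e) at 2. apply ln_le; [lra|]. assert (H := exp_ineq1_le e). lra. }
    eapply Rle_trans; [apply Rabs_triang|]. rewrite Rabs_Ropp, (Rabs_right (ln (e + 1))); lra. }
  assert (Hconst : forall e, 0 < e < u -> g u = g e).
  { intros e He. destruct (MVT_gen g e u (fun _ => 0)) as [c [_ Hc]].
    - rewrite Rmin_left, Rmax_right by lra. intros x Hx. apply Hg'. lra.
    - rewrite Rmin_left, Rmax_right by lra. intros x Hx.
      apply continuity_pt_filterlim, continuous_of_derive. exists 0. apply Hg'. lra.
    - lra. }
  assert (Hzero : Rabs (g u) <= 0).
  { apply Rle_plus_epsilon. intros eps Heps.
    set (e := Rmin (u / 2) (eps / 2)).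
    assert (He : 0 < e < u) by (split; [apply Rmin_pos|eapply Rle_lt_trans; [apply Rmin_l|]]; lra).
    rewrite (Hconst e He). assert (Rmin (u / 2) (eps / 2) <= eps / 2) by apply Rmin_r.
    specialize (Hsmall e (proj1 He)). unfold e in *. lra. }
  apply Rminus_diag_uniq, Rabs_eq_0, Rle_antisym; [exact Hzero|apply Rabs_pos].
Qed.

Lemma sum_f_R0_mul_sub1_div (a b : nat -> R) (L : R) (n : nat) : L <> 0 ->
  sum_f_R0 (fun k => a k * ((b k - 1) / L)) n =
  (sum_f_R0 (fun k => a k * b k) n - sum_f_R0 a n) / L.
Proof.
  intros HL. induction n as [|n IH]; simpl; [field; exact HL|].
  rewrite IH. field. exact HL.
Qed.

Lemma sum_alternating_binomial (n : nat) (x : R) :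
  sum_f_R0 (fun k => (-1) ^ (k + 1) * Binomial.C n k * x ^ k) n = - (1 - x) ^ n.
Proof.
  replace (1 - x) with (- x + 1) by ring.
  replace (- (- x + 1) ^ n) with (-1 * (- x + 1) ^ n) by ring.
  rewrite binomial, scal_sum. apply sum_eq. intros k _.
  replace (- x) with (-1 * x) by ring. rewrite pow1, pow_add, Rpow_mult_distr. ring.
Qed.

Lemma pow_one_sub_mul_powm1_div_ln (m : nat) (x : R) : 0 < x < 1 ->
  (1 - x) ^ m * powm1_div_ln 1 x =
  sum_f_R0 (fun k => (-1) ^ (k + 1) * Binomial.C (S m) k * powm1_div_ln (INR k) x) (S m).
Proof.
  intros Hx.
  assert (Hl : ln x <> 0) by (apply ln_neq_0; lra).
  assert (Hpow : forall s, powm1_div_ln s x = (Rpower x s - 1) / ln x).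
  { intros s. unfold powm1_div_ln, Rpower.
    destruct (Rle_dec x 0); [lra|]. destruct (Req_EM_T x 1); [lra|reflexivity]. }
  rewrite (sum_eq _ (fun k => (-1) ^ (k + 1) * Binomial.C (S m) k * ((x ^ k - 1) / ln x))).
  2:{ intros k _. rewrite Hpow, Rpower_pow by lra. reflexivity. }
  rewrite sum_f_R0_mul_sub1_div by exact Hl.
  rewrite sum_alternating_binomial.
  rewrite (sum_eq _ (fun k => (-1) ^ (k + 1) * Binomial.C (S m) k * 1 ^ k))
    by (intros k _; rewrite pow1; ring).
  rewrite sum_alternating_binomial, Hpow, Rpower_1 by lra.
  simpl. field. exact Hl.
Qed.

Lemma is_RInt_pow_one_sub_mul_powm1_div_ln (m : nat) :
  is_RInt (fun x => (1 - x) ^ m * powm1_div_ln 1 x) 0 1 (inner_sum1 (S m)).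
Proof.
  set (f := fun k x => (-1) ^ (k + 1) * Binomial.C (S m) k * powm1_div_ln (INR k) x).
  apply is_RInt_ext_01 with (f := fun x => sum_n (fun k => f k x) (S m)).
  { intros x Hx. rewrite sum_n_Reals. symmetry. apply pow_one_sub_mul_powm1_div_ln, Hx. }
  unfold inner_sum1. rewrite <- sum_n_Reals.
  apply (is_RInt_sum_n (V := R_NormedModule) f). intros k. unfold f.
  apply (is_RInt_scal (V := R_NormedModule) (powm1_div_ln (INR k))).
  rewrite <- RInt_powm1_div_ln by apply pos_INR.
  apply (RInt_correct (V := R_CompleteNormedModule)), ex_RInt_powm1_div_ln, pos_INR.
Qed.

Lemma inner_sum1_opp (n : nat) : inner_sum1 n = (- inner_sum2 n)%R.
Proof.
  unfold inner_sum1, inner_sum2.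
  transitivity (-1 * sum_f_R0 (fun k => (-1) ^ k * Binomial.C n k * ln (INR k + 1)) n)%R; [|ring].
  rewrite scal_sum. apply sum_eq. intros k _. rewrite pow_add. ring.
Qed.

(** * Complex-valued integrals *)

Lemma is_RInt_C_intro (f : R -> C) (a b : R) (l : C) :
  is_RInt (fun x => Re (f x)) a b (Re l) -> is_RInt (fun x => Im (f x)) a b (Im l) ->
  @is_RInt C_R_NormedModule f a b l.
Proof.
  intros H1 H2. destruct l.
  apply (is_RInt_fct_extend_pair (U := R_NormedModule) (V := R_NormedModule)); assumption.
Qed.

Lemma ex_RInt_C_intro (f : R -> C) (a b : R) :
  ex_RInt (fun x => Re (f x)) a b -> ex_RInt (fun x => Im (f x)) a b ->
  @ex_RInt C_R_NormedModule f a b.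
Proof.
  intros [l1 H1] [l2 H2]. exists (l1, l2). apply is_RInt_C_intro; assumption.
Qed.

Lemma is_RInt_RtoC (g : R -> R) (a b l : R) : is_RInt g a b l ->
  @is_RInt C_R_NormedModule (fun x => RtoC (g x)) a b (RtoC l).
Proof.
  intros H. apply is_RInt_C_intro; [exact H|]. simpl.
  assert (H0 := is_RInt_const (V := R_NormedModule) a b 0).
  change (scal (b - a) 0) with ((b - a) * 0) in H0. rewrite Rmult_0_r in H0. exact H0.
Qed.

Lemma is_RInt_Cmult_l (c : C) (f : R -> C) (a b : R) (l : C) :
  @is_RInt C_R_NormedModule f a b l ->
  @is_RInt C_R_NormedModule (fun x => Cmult c (f x)) a b (Cmult c l).
Proof.
  intros H.
  assert (H1 := is_RInt_fct_extend_fst (U := R_NormedModule) (V := R_NormedModule) f a b l H).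
  assert (H2 := is_RInt_fct_extend_snd (U := R_NormedModule) (V := R_NormedModule) f a b l H).
  destruct c as [c1 c2]. apply is_RInt_C_intro; simpl.
  - apply (is_RInt_minus (V := R_NormedModule));
      apply (is_RInt_scal (V := R_NormedModule)); assumption.
  - apply (is_RInt_plus (V := R_NormedModule));
      apply (is_RInt_scal (V := R_NormedModule)); assumption.
Qed.

Lemma is_RInt_C_ext_01 (f g : R -> C) (l : C) :
  (forall x, 0 < x < 1 -> f x = g x) ->
  @is_RInt C_R_NormedModule f 0 1 l -> @is_RInt C_R_NormedModule g 0 1 l.
Proof.
  intros Hfg. apply is_RInt_ext. rewrite Rmin_left, Rmax_right by lra. exact Hfg.
Qed.

Lemma norm_C_R (u : C) : @norm _ C_R_NormedModule u = Cmod u.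
Proof.
  destruct u as [u1 u2]. unfold norm. simpl. unfold prod_norm, Cmod. simpl.
  change (norm u1) with (Rabs u1). change (norm u2) with (Rabs u2).
  rewrite !Rmult_1_r, <- !Rabs_mult, !Rabs_pos_eq by apply Rle_0_sqr. reflexivity.
Qed.

Lemma one_sub_mul_pos (x a : R) : 0 <= x <= 1 -> a < 1 -> 0 < 1 - x * a.
Proof.
  intros Hx Ha. destruct (Rle_lt_or_eq_dec 0 x (proj1 Hx)) as [H|<-]; [|lra].
  assert (0 < x * (1 - a)) by (apply Rmult_lt_0_compat; lra). lra.
Qed.

Lemma Clog_of_Re_pos (u : C) : 0 < Re u ->
  Clog u = (ln (Re u ^ 2 + Im u ^ 2) / 2, atan (Im u / Re u)).
Proof.
  intros Hu. destruct u as [c d]. unfold Clog, Carg, Cmod. simpl in *.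
  destruct (Rlt_dec 0 c); [|lra]. f_equal.
  assert (Hs : 0 < c * c + d * d) by nra.
  rewrite <- (sqrt_sqrt (c * (c * 1) + d * (d * 1))) at 2 by nra.
  rewrite ln_mult by (apply sqrt_lt_R0; nra). field.
Qed.

Open Scope C_scope.

Lemma Clog_Cinv (u : C) : 0 < Re u -> Clog (/ u) = - Clog u.
Proof.
  intros Hu.
  assert (Hn : u <> 0) by (intros H; rewrite H in Hu; simpl in Hu; lra).
  assert (Hinv : 0 < Re (/ u)).
  { destruct u as [c d]. simpl in *. apply Rdiv_lt_0_compat; [lra|nra]. }
  rewrite !Clog_of_Re_pos by assumption.
  destruct u as [c d]. simpl in *.
  set (D := (c * (c * 1) + d * (d * 1))%R) in *.
  assert (HD : (0 < D)%R) by (unfold D; nra).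
  apply injective_projections; simpl.
  - replace (c / D * (c / D * 1) + - d / D * (- d / D * 1))%R with (/ D)%R
      by (unfold D in *; field; lra).
    rewrite ln_Rinv by exact HD. field.
  - rewrite <- atan_opp. f_equal. field. split; lra.
Qed.

Lemma is_RInt_div_one_sub_mul (z : C) : Re z < 1 ->
  @is_RInt C_R_NormedModule (fun x : R => z / (1 - x * z)) 0 1 (- Clog (1 - z)).
Proof.
  intros Hz. destruct z as [a b]. simpl in Hz.
  set (D := fun x => ((1 - x * a) ^ 2 + (x * b) ^ 2)%R).
  assert (HD : forall x, 0 <= x <= 1 -> (0 < D x)%R).
  { intros x Hx. assert (H := one_sub_mul_pos x a Hx Hz). unfold D. nra. }
  replace (- Clog (1 - (a, b))) with
    ((- ln (D 1) / 2 - - ln (D 0) / 2)%R,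
     (atan (1 * b / (1 - 1 * a)) - atan (0 * b / (1 - 0 * a)))%R).
  2:{ rewrite Clog_of_Re_pos by (simpl; lra).
      replace (D 0) with 1%R by (unfold D; ring).
      replace (D 1) with (Re (1 - (a, b)) ^ 2 + Im (1 - (a, b)) ^ 2)%R
        by (unfold D; simpl; ring).
      rewrite ln_1, Rmult_0_l, Rdiv_0_l, atan_0.
      replace (1 * b / (1 - 1 * a))%R with (- (Im (1 - (a, b)) / Re (1 - (a, b))))%R
        by (simpl; field; lra).
      rewrite atan_opp. apply injective_projections; simpl; field. }
  apply is_RInt_C_intro; simpl.
  - apply is_RInt_ext_01 with (f := fun x => ((a - x * (a ^ 2 + b ^ 2)) / D x)%R).
    { intros x Hx. assert (H := HD x ltac:(lra)). unfold D in H |- *. field. intros Hq. nra. }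
    apply (is_RInt_derive_01 (fun x => - ln (D x) / 2)%R); intros x Hx; assert (H := HD x Hx);
      unfold D in H |- *.
    + auto_derive; [lra|]. field. lra.
    + apply continuous_of_derive. auto_derive. lra.
  - apply is_RInt_ext_01 with (f := fun x => (b / D x)%R).
    { intros x Hx. assert (H := HD x ltac:(lra)). unfold D in H |- *. field. intros Hq. nra. }
    apply (is_RInt_derive_01 (fun x => atan (x * b / (1 - x * a)))%R); intros x Hx;
      assert (H := HD x Hx); assert (H1 := one_sub_mul_pos x a Hx Hz); unfold D in H |- *.
    + auto_derive; [lra|]. field. split; [lra|]. intros Hq. nra.
    + apply continuous_of_derive. auto_derive. lra.
Qed.

(** * Termwise integration of a geometric series *)

Lemma is_series_of_norm_le_pow {K : AbsRing} {V : NormedModule K} (a : nat -> V) (l : V)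
  (M r : R) :
  0 <= r < 1 -> (forall N, norm (minus (sum_n a N) l) <= M * r ^ N) -> is_series a l.
Proof.
  intros Hr Hb. apply (filterlim_locally_ball_norm (sum_n a) l). intros eps.
  assert (HM := Rabs_pos M). assert (HMle := Rle_abs M).
  destruct (pow_lt_1_zero r ltac:(rewrite Rabs_right; lra) (eps / (Rabs M + 1))) as [N0 HN0].
  { apply Rdiv_lt_0_compat; [apply cond_pos|lra]. }
  exists N0. intros N HN. unfold ball_norm.
  specialize (HN0 N HN). assert (Hp : 0 <= r ^ N) by (apply pow_le; lra).
  rewrite Rabs_right in HN0 by lra. apply Rlt_div_r in HN0; [|lra].
  eapply Rle_lt_trans; [apply Hb|]. nra.
Qed.

Lemma geometric_sum_remainder (w y q : C) (N : nat) : 1 - w * y <> 0 ->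
  w * q / (1 - w * y) - sum_n (fun m => w ^ S m * (y ^ m * q)) N =
  w ^ S (S N) * (y ^ S N * q) / (1 - w * y).
Proof.
  intros H. induction N as [|N IH].
  - rewrite sum_O. simpl. field. exact H.
  - rewrite sum_Sn. change (plus ?A ?B) with (A + B).
    set (t := sum_n _ N) in *.
    replace (w * q / (1 - w * y) - (t + w ^ S (S N) * (y ^ S N * q)))
      with (w * q / (1 - w * y) - t - w ^ S (S N) * (y ^ S N * q)) by ring.
    rewrite IH. simpl. field. exact H.
Qed.

Lemma Cmod_one_sub_mul_ge (w : C) (y : R) : Rabs y <= 1 ->
  (1 - Cmod w <= Cmod (1 - w * y))%R.
Proof.
  intros Hy.
  assert (H := Cmod_triangle (1 - w * y) (w * y)).
  replace (1 - w * y + w * y) with (RtoC 1) in H by ring.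
  rewrite Cmod_1, Cmod_mult, Cmod_R in H.
  assert (0 <= Cmod w) by apply Cmod_ge_0. nra.
Qed.

Lemma Cmod_geometric_remainder_le (w : C) (y q M : R) (N : nat) :
  Cmod w < 1 -> (Rabs y <= 1)%R -> (Rabs q <= M)%R ->
  (Cmod (w ^ S (S N) * (y ^ S N * q) / (1 - w * y)) <= M * Cmod w ^ S (S N) / (1 - Cmod w))%R.
Proof.
  intros Hw Hy Hq.
  assert (Hd := Cmod_one_sub_mul_ge w y Hy).
  assert (Hd0 : 1 - w * y <> 0) by (intros H0; rewrite H0, Cmod_0 in Hd; lra).
  rewrite Cmod_div, !Cmod_mult, !Cmod_pow, !Cmod_R by exact Hd0.
  assert (Hyn : (0 <= Rabs y ^ S N <= 1)%R).
  { split; [apply pow_le, Rabs_pos|].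
    rewrite <- (pow1 (S N)). apply pow_incr. split; [apply Rabs_pos|exact Hy]. }
  assert (Hwn : (0 <= Cmod w ^ S (S N))%R) by (apply pow_le, Cmod_ge_0).
  assert (Hq0 := Rabs_pos q).
  unfold Rdiv. rewrite (Rmult_comm M). apply Rmult_le_compat.
  - apply Rmult_le_pos; [exact Hwn|]. apply Rmult_le_pos; [apply Hyn|exact Hq0].
  - apply Rlt_le, Rinv_0_lt_compat. lra.
  - apply Rmult_le_compat_l; [exact Hwn|]. nra.
  - apply Rinv_le_contravar; lra.
Qed.

Lemma is_series_pow_mul_moment (w : C) (y q : R -> R) (M : R) (c : nat -> R) (I : C) :
  Cmod w < 1 ->
  (forall x, 0 <= x <= 1 -> Rabs (y x) <= 1 /\ Rabs (q x) <= M) ->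
  (forall m, is_RInt (fun x => y x ^ m * q x)%R 0 1 (c m)) ->
  @is_RInt C_R_NormedModule (fun x : R => w * q x / (1 - w * y x)) 0 1 I ->
  is_series (fun m => w ^ S m * c m) I.
Proof.
  intros Hw Hyq Hc HI.
  set (part := fun N => sum_n (fun m => w ^ S m * c m) N).
  set (rem := fun N (x : R) => w ^ S (S N) * (y x ^ S N * q x) / (1 - w * y x)).
  assert (HS : forall N, @is_RInt C_R_NormedModule
                 (fun x : R => sum_n (fun m => w ^ S m * (y x ^ m * q x)) N) 0 1 (part N)).
  { intros N. apply (is_RInt_sum_n (V := C_R_NormedModule) (fun m x => w ^ S m * (y x ^ m * q x))).
    intros m. apply is_RInt_Cmult_l.
    apply is_RInt_ext with (f := fun x => RtoC (y x ^ m * q x)).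
    - intros x _. rewrite RtoC_mult, RtoC_pow. reflexivity.
    - apply is_RInt_RtoC, Hc. }
  assert (Hrem : forall N, @is_RInt C_R_NormedModule (rem N) 0 1 (I - part N)).
  { intros N. apply is_RInt_C_ext_01 with
      (f := fun x : R => w * q x / (1 - w * y x) - sum_n (fun m => w ^ S m * (y x ^ m * q x)) N).
    - intros x Hx. apply geometric_sum_remainder. intros H0.
      assert (Hd := Cmod_one_sub_mul_ge w (y x) (proj1 (Hyq x ltac:(lra)))).
      rewrite H0, Cmod_0 in Hd. lra.
    - apply (is_RInt_minus (V := C_R_NormedModule)); [exact HI|apply HS]. }
  apply (is_series_of_norm_le_pow _ _ (M * Cmod w ^ 2 / (1 - Cmod w)) (Cmod w)).
  { split; [apply Cmod_ge_0|exact Hw]. }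
  intros N. apply Rle_trans with (@norm _ C_R_NormedModule (I - part N)).
  { right. rewrite norm_C_R, <- Cmod_opp. change (Cmod (- (part N - I)) = Cmod (I - part N)).
    f_equal. ring. }
  replace (M * Cmod w ^ 2 / (1 - Cmod w) * Cmod w ^ N)%R
    with ((1 - 0) * (M * Cmod w ^ S (S N) / (1 - Cmod w)))%R by (simpl; field; lra).
  apply (norm_RInt_le_const (V := C_R_NormedModule) (rem N)); [lra| |apply Hrem].
  intros x Hx. rewrite norm_C_R. destruct (Hyq x Hx) as [Hy Hq].
  apply Cmod_geometric_remainder_le; assumption.
Qed.

(** * The generalized Euler constant *)

Lemma one_sub_mul_neq_0 (z : C) (x : R) : Re z < 1 -> (0 <= x <= 1)%R -> 1 - x * z <> 0.
Proof.
  intros Hz Hx H. apply (f_equal Re) in H. destruct z as [a b]. simpl in Hz, H.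
  assert (Hp := one_sub_mul_pos x a Hx Hz). lra.
Qed.

Lemma gamma_integrand_eq (z : C) (x : R) : Re z < 1 -> (0 < x < 1)%R ->
  gamma_integrand z x = (1 - powm1_div_ln 1 x) / (1 - x * z).
Proof.
  intros Hz Hx.
  assert (Hl : ln x <> 0%R) by (apply ln_neq_0; lra).
  assert (Hnum : RtoC (1 - x + ln x) = (1 - powm1_div_ln 1 x) * ln x).
  { unfold powm1_div_ln. destruct (Rle_dec x 0); [lra|]. destruct (Req_EM_T x 1); [lra|].
    rewrite Rmult_1_l, exp_ln by lra. rewrite <- RtoC_minus, <- RtoC_mult.
    f_equal. field. exact Hl. }
  unfold gamma_integrand. rewrite Hnum. field. split.
  - apply one_sub_mul_neq_0; [exact Hz|lra].
  - intros H. apply Hl, (f_equal Re H).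
Qed.

Lemma ex_RInt_gamma_integrand (z : C) : Re z < 1 ->
  @ex_RInt C_R_NormedModule (gamma_integrand z) 0 1.
Proof.
  intros Hz.
  apply ex_RInt_ext with (f := fun x : R => (1 - powm1_div_ln 1 x) / (1 - x * z)).
  { rewrite Rmin_left, Rmax_right by lra. intros x Hx.
    symmetry. apply gamma_integrand_eq; [exact Hz|exact Hx]. }
  destruct z as [a b]. simpl in Hz.
  set (D := fun x => ((1 - x * a) ^ 2 + (x * b) ^ 2)%R).
  assert (HD : forall x, (0 <= x <= 1)%R -> (0 < D x)%R).
  { intros x Hx. assert (H := one_sub_mul_pos x a Hx Hz). unfold D. nra. }
  assert (HL : forall x, (0 <= x <= 1)%R -> continuous (fun t => 1 - powm1_div_ln 1 t)%R x).
  { intros x Hx.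
    apply (continuous_minus (U := R_UniformSpace) (V := R_NormedModule) (fun _ => 1%R)).
    - apply continuous_const.
    - apply continuous_powm1_div_ln; lra. }
  assert (Hcomp : forall r g : R -> R, (forall x, (0 <= x <= 1)%R -> ex_derive r x) ->
            (forall x, (0 < x < 1)%R -> ((1 - powm1_div_ln 1 x) * r x)%R = g x) ->
            ex_RInt g 0 1).
  { intros r g Hr Hg. exists (RInt (fun x => (1 - powm1_div_ln 1 x) * r x)%R 0 1).
    apply is_RInt_ext_01 with (1 := Hg).
    apply (RInt_correct (V := R_CompleteNormedModule)), ex_RInt_01_of_continuous.
    intros x Hx. apply (continuous_mult (K := R_AbsRing)); [apply HL, Hx|].
    apply continuous_of_derive, Hr, Hx. }
  apply ex_RInt_C_intro.
  - apply (Hcomp (fun x => (1 - x * a) / D x)%R).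
    + intros x Hx. assert (H := HD x Hx). unfold D in H |- *. auto_derive. lra.
    + intros x Hx. assert (H := HD x ltac:(lra)). unfold D in H |- *. simpl. field. intros Hq. nra.
  - apply (Hcomp (fun x => x * b / D x)%R).
    + intros x Hx. assert (H := HD x Hx). unfold D in H |- *. auto_derive. lra.
    + intros x Hx. assert (H := HD x ltac:(lra)). unfold D in H |- *. simpl. field. intros Hq. nra.
Qed.

Lemma is_RInt_mul_gamma_add_Clog (z : C) : Re z < 1 ->
  @is_RInt C_R_NormedModule
    (fun x : R => (- z / (1 - z)) * powm1_div_ln 1 x / (1 - (- z / (1 - z)) * (1 - x)%R)) 0 1
    (z * gamma_fun z + Clog (1 - z)).
Proof.
  intros Hz.
  assert (Hz1 : 1 - z <> 0) by (intros H; apply (f_equal Re) in H; destruct z; simpl in *; lra).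
  apply is_RInt_C_ext_01 with (f := fun x : R => z * gamma_integrand z x - z / (1 - x * z)).
  - intros x Hx. assert (Hd := one_sub_mul_neq_0 z x Hz ltac:(lra)).
    rewrite (gamma_integrand_eq z x Hz Hx).
    replace (1 - (- z / (1 - z)) * (1 - x)%R) with ((1 - x * z) / (1 - z))
      by (rewrite RtoC_minus; field; exact Hz1).
    field. split; assumption.
  - replace (z * gamma_fun z + Clog (1 - z)) with (z * gamma_fun z - - Clog (1 - z)) by ring.
    apply (is_RInt_minus (V := C_R_NormedModule)).
    + apply is_RInt_Cmult_l, (RInt_correct (V := C_R_CompleteNormedModule)).
      apply ex_RInt_gamma_integrand, Hz.
    + apply is_RInt_div_one_sub_mul, Hz.
Qed.

Lemma Cmod_moebius_lt_1 (z : C) : Re z < 1 / 2 -> Cmod (- z / (1 - z)) < 1.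
Proof.
  intros Hz. destruct z as [a b]. simpl in Hz.
  assert (Hnz : 1 - (a, b) <> 0) by (intros H; apply (f_equal Re) in H; simpl in H; lra).
  rewrite Cmod_div, Cmod_opp by exact Hnz.
  apply Rlt_div_l; [apply Cmod_gt_0, Hnz|]. rewrite Rmult_1_l.
  unfold Cmod. simpl. apply sqrt_lt_1; nra.
Qed.

Lemma Re_moebius_lt (w : C) : Cmod w < 1 -> Re (- w / (1 - w)) < 1 / 2.
Proof.
  intros Hw. destruct w as [p q].
  assert (Hpq : (p ^ 2 + q ^ 2 < 1)%R).
  { apply sqrt_lt_0_alt. rewrite sqrt_1. exact Hw. }
  assert (HD : (0 < (1 - p) ^ 2 + q ^ 2)%R) by nra.
  simpl.
  replace (- p * ((1 + - p) / ((1 + - p) * ((1 + - p) * 1) + (0 + - q) * ((0 + - q) * 1))) -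
           - q * (- (0 + - q) / ((1 + - p) * ((1 + - p) * 1) + (0 + - q) * ((0 + - q) * 1))))%R
    with ((p ^ 2 + q ^ 2 - p) / ((1 - p) ^ 2 + q ^ 2))%R by (field; intros Hq; nra).
  apply Rlt_div_l; nra.
Qed.

Lemma is_series_mul_gamma_add_Clog (z : C) : Re z < 1 / 2 ->
  is_series (fun m => (- z / (1 - z)) ^ S m * inner_sum1 (S m)) (z * gamma_fun z + Clog (1 - z)).
Proof.
  intros Hz.
  apply (is_series_pow_mul_moment _ (fun x => 1 - x)%R (powm1_div_ln 1) 1).
  - apply Cmod_moebius_lt_1, Hz.
  - intros x Hx. split; [rewrite Rabs_right; lra|apply Rabs_powm1_div_ln_le; lra].
  - apply is_RInt_pow_one_sub_mul_powm1_div_ln.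
  - apply is_RInt_mul_gamma_add_Clog. lra.
Qed.

Lemma is_series_inner_sum2_moebius (w : C) : Cmod w < 1 ->
  exists s : C,
    is_series (fun m => w ^ S m * inner_sum2 (S m)) s /\
    w * gamma_fun (- w / (1 - w)) = - ((1 - w) * Clog (1 - w)) + (1 - w) * s.
Proof.
  intros Hw.
  assert (Hre : (Rabs (Re w) < 1)%R) by (eapply Rle_lt_trans; [apply re_le_Cmod|exact Hw]).
  apply Rabs_def2 in Hre.
  assert (Hw1 : 1 - w <> 0) by (intros H; apply (f_equal Re) in H; destruct w; simpl in *; lra).
  set (z := - w / (1 - w)).
  assert (Ez : - z / (1 - z) = w).
  { unfold z. field. split; [exact Hw1|].
    intros H. apply (f_equal Re) in H. simpl in H. lra. }
  assert (El : Clog (1 - z) = - Clog (1 - w)).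
  { replace (1 - z) with (/ (1 - w)) by (unfold z; field; exact Hw1).
    apply Clog_Cinv. destruct w. simpl in *. lra. }
  assert (H := is_series_mul_gamma_add_Clog z (Re_moebius_lt w Hw)).
  rewrite Ez in H.
  exists (- (z * gamma_fun z + Clog (1 - z))). split.
  - assert (Hterm : forall m, - (w ^ S m * inner_sum1 (S m)) = w ^ S m * inner_sum2 (S m))
      by (intros m; rewrite inner_sum1_opp, RtoC_opp; ring).
    apply (is_series_ext _ _ _ Hterm).
    apply (is_series_opp (K := C_AbsRing) (V := C_NormedModule)), H.
  - rewrite El. unfold z. field. exact Hw1.
Qed.

Close Scope C_scope.

Theorem theorem9 :
  (forall z : C, Re z < 1 / 2 ->
     is_series
       (fun m : nat => Cmult (Cpow (Cdiv (Copp z) (Cminus (RtoC 1) z)) (S m))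
                             (RtoC (inner_sum1 (S m))))
       (Cplus (Cmult z (gamma_fun z)) (Clog (Cminus (RtoC 1) z))))
  /\
  (forall w : C, Cmod w < 1 ->
     exists s : C,
       is_series (fun m : nat => Cmult (Cpow w (S m)) (RtoC (inner_sum2 (S m)))) s /\
       Cmult w (gamma_fun (Cdiv (Copp w) (Cminus (RtoC 1) w))) =
       Cplus (Copp (Cmult (Cminus (RtoC 1) w) (Clog (Cminus (RtoC 1) w))))
             (Cmult (Cminus (RtoC 1) w) s)).
Proof.
  split.
  - exact is_series_mul_gamma_add_Clog.
  - exact is_series_inner_sum2_moebius.
Qed.
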